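(* Let $\langle\mathcal X,\mathcal C,d,\ell,(x_1,\dots,x_n)\rangle$ be a multiple facility location instance and $1\le k\le n$. Define the feature $f:[n]\to\mathcal X$ by $f(i)=x_i$. Then $$\mathbb E_{S\sim\mathcal U_{k,n}}\big[\textsc{Social-Cost}(\overline y(S))\big]\le\textsc{Social-Opt}+\mathbb E_{S\sim\mathcal U_{k,n}}\big[W(\phi_f^{[n]},\phi_f^S)\big].$$
   Context: A multiple facility location instance consists of a metric space $(\mathcal X,d)$ with $d:\mathcal X\times\mathcal X\to[0,1]$, candidate locations $\mathcal C\subseteq\mathcal X$, a number $\ell\ge1$ of facilities and agent locations $x_1,\dots,x_n$. For $y\in\mathcal C^\ell$, $\mathrm{Cost}_i(y)=\min_{j\in[\ell]}d(x_i,y_j)$, $\textsc{Social-Cost}(y)=\frac1n\sum_i\mathrm{Cost}_i(y)$, $\textsc{Social-Opt}=\min_{y\in\mathcal C^\ell}\textsc{Social-Cost}(y)$, $\textsc{Panel-Cost}(y,S)=\frac1k\sum_{i\in S}\mathrm{Cost}_i(y)$, $\overline y(S)\in\arg\min_{y\in\mathcal C^\ell}\textsc{Panel-Cost}(y,S)$ (minimizers assumed to exist). For nonempty $S\subseteq[n]$, $\phi_f^S=\frac1{|S|}\sum_{i\in S}\delta(f(i))$ with $\delta$ a Dirac mass; $W(\phi,\psi)=\min_\gamma\mathbb E_{(x,y)\sim\gamma}[d(x,y)]$ over couplings $\gamma$ of $\phi,\psi$. $\mathcal U_{k,n}$ is the uniform distribution over size-$k$ subsets of $[n]$. *)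

From HB Require Import structures.
From mathcomp Require Import all_boot all_order all_algebra.
From mathcomp Require Import classical_sets reals.
Set Implicit Arguments. Unset Strict Implicit. Unset Printing Implicit Defensive.
Import Order.TTheory GRing.Theory Num.Theory.
Local Open Scope ring_scope.

Section FL.
Variables (R : realType) (X : eqType).

Definition is_metric01 (d : X -> X -> R) : Prop :=
  (forall a b, 0 <= d a b <= 1) /\
  (forall a b, d a b = 0 <-> a = b) /\
  (forall a b, d a b = d b a) /\
  (forall a b c, d a c <= d a b + d b c).

Definition in_cands (C : set X) (l : nat) (y : 'I_l -> X) : Prop :=
  forall j, C (y j).

(* Cost_i(y) = min_j d(x_i, y_j).  Seeded with 1: since d <= 1 and l >= 1
   this is exactly the minimum over j. *)
Definition cost (d : X -> X -> R) (l : nat) (xi : X) (y : 'I_l -> X) : R :=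
  \big[Num.min/1]_(j < l) d xi (y j).

Definition social_cost (d : X -> X -> R) (n l : nat) (x : 'I_n -> X)
  (y : 'I_l -> X) : R :=
  n%:R^-1 * \sum_(i < n) cost d (x i) y.

Definition panel_cost (d : X -> X -> R) (n l k : nat) (x : 'I_n -> X)
  (y : 'I_l -> X) (S : {set 'I_n}) : R :=
  k%:R^-1 * \sum_(i in S) cost d (x i) y.

(* Empirical distribution phi_f^S = (1/|S|) sum_{i in S} delta(x_i),
   represented by its (finitely supported) mass function on X. *)
Definition emp (n : nat) (x : 'I_n -> X) (S : {set 'I_n}) : X -> R :=
  fun z => #|[set i in S | x i == z]|%:R / #|S|%:R.

Definition pts (n : nat) (x : 'I_n -> X) : seq X := undup [seq x i | i <- enum 'I_n].

Definition is_coupling (P : seq X) (mu nu : X -> R) (g : X -> X -> R) : Prop :=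
  (forall a b, 0 <= g a b) /\
  (forall a b, g a b != 0 -> (a \in P) && (b \in P)) /\
  (forall a, \sum_(b <- P) g a b = mu a) /\
  (forall b, \sum_(a <- P) g a b = nu b).

Definition wass (d : X -> X -> R) (P : seq X) (mu nu : X -> R) : R :=
  inf [set c | exists g, is_coupling P mu nu g /\
                 c = \sum_(a <- P) \sum_(b <- P) g a b * d a b].

End FL.
Arguments emp {R X n} x S z.

Definition Eunif (R : realType) (n k : nat) (F : {set 'I_n} -> R) : R :=
  (#|[set S : {set 'I_n} | #|S| == k]|%:R)^-1 *
  \sum_(S : {set 'I_n} | #|S| == k) F S.

From HB Require Import structures.
From mathcomp Require Import all_boot all_order all_algebra.
From mathcomp Require Import classical_sets reals.
From mathcomp Require Import fingroup perm.
From mathcomp Require Import ring.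
Import Order.TTheory GRing.Theory Num.Theory.
Local Open Scope ring_scope.

Set Implicit Arguments.
Unset Strict Implicit.
Unset Printing Implicit Defensive.

(* For every panel S, the social cost is the empirical mean of the
   1-Lipschitz function [cost _ y] under the population distribution, and
   moving that distribution onto the panel distribution changes the mean by at
   most W; hence Social-Cost(ybar S) <= Panel-Cost(ybar S, S) + W
   <= Panel-Cost(yopt, S) + W.  Averaging over uniform panels, the panel cost
   of a fixed yopt averages to its social cost, since every agent lies in the
   same number of k-panels. *)

Section Cost.
Variables (R : realType) (X : eqType) (d : X -> X -> R).
Hypotheses (d_ge0 : forall a b, 0 <= d a b)
           (d_triangle : forall a b c, d a c <= d a b + d b c).

Lemma cost_lipschitz l (y : 'I_l -> X) a b : cost d a y <= cost d b y + d a b.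
Proof.
rewrite -lerBlDr /cost; apply: le_bigmin => [|j _]; rewrite lerBlDr.
  by apply: le_trans (bigmin_le_id _ _ _ _) _; rewrite lerDl.
by apply: le_trans (bigmin_le _ j _) _; rewrite addrC.
Qed.

End Cost.

Section Coupling.
Variables (R : realType) (X : eqType) (d : X -> X -> R).
Variables (P : seq X) (mu nu : X -> R).

Lemma coupling_mean_le (h : X -> R) (g : X -> X -> R) :
  (forall a b, h a <= h b + d a b) -> is_coupling P mu nu g ->
  \sum_(a <- P) mu a * h a
    <= \sum_(b <- P) nu b * h b + \sum_(a <- P) \sum_(b <- P) g a b * d a b.
Proof.
move=> h_lip [g_ge0 [_ [g_mu g_nu]]].
under eq_bigr => a _ do rewrite -g_mu mulr_suml.
under [X in _ <= X + _]eq_bigr => b _ do rewrite -g_nu mulr_suml.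
rewrite [X in _ <= X + _]exchange_big -big_split /=.
apply: ler_sum => a _; rewrite -big_split /=; apply: ler_sum => b _.
by rewrite -mulrDr ler_wpM2l.
Qed.

Lemma product_coupling :
  (forall a, 0 <= mu a) -> (forall b, 0 <= nu b) ->
  (forall a, mu a != 0 -> a \in P) -> (forall b, nu b != 0 -> b \in P) ->
  \sum_(a <- P) mu a = 1 -> \sum_(b <- P) nu b = 1 ->
  is_coupling P mu nu (fun a b => mu a * nu b).
Proof.
move=> mu_ge0 nu_ge0 mu_supp nu_supp mu1 nu1.
split; first by move=> a b; rewrite mulr_ge0.
split; first by move=> a b; rewrite mulf_eq0 negb_or => /andP[/mu_supp -> /nu_supp ->].
by split=> [a|b]; [rewrite -mulr_sumr nu1 mulr1 | rewrite -mulr_suml mu1 mul1r].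
Qed.

Lemma lipschitz_mean_le_wass (h : X -> R) :
  (forall a b, h a <= h b + d a b) -> (exists g, is_coupling P mu nu g) ->
  \sum_(a <- P) mu a * h a <= \sum_(b <- P) nu b * h b + wass d P mu nu.
Proof.
move=> h_lip [g0 g0_coupling]; rewrite addrC -lerBlDr; apply: lb_le_inf.
  by exists (\sum_(a <- P) \sum_(b <- P) g0 a b * d a b); exists g0.
move=> _ [g [g_coupling ->]]; rewrite lerBlDr addrC.
exact: coupling_mean_le.
Qed.

End Coupling.

Section Empirical.
Variables (R : realType) (X : eqType) (n : nat) (x : 'I_n -> X).

Lemma mem_pts i : x i \in pts x.
Proof. by rewrite mem_undup; apply: map_f; rewrite mem_enum. Qed.

Lemma emp_ge0 (S : {set 'I_n}) a : 0 <= emp (R:=R) x S a.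
Proof. by rewrite divr_ge0. Qed.

Lemma emp_supp (S : {set 'I_n}) a : emp (R:=R) x S a != 0 -> a \in pts x.
Proof.
apply: contraR => a_out; rewrite /emp (@eq_card0 _ [set i in S | x i == a]) ?mul0r //.
move=> i; rewrite !inE; case: eqP => [xi_a|]; last by rewrite andbF.
by move: a_out; rewrite -xi_a mem_pts.
Qed.

Lemma sum_pts_indicator i (h : X -> R) :
  \sum_(a <- pts x) (x i == a)%:R * h a = h (x i).
Proof.
rewrite (big_rem (x i)) ?mem_pts // eqxx mul1r big1_seq /= ?addr0 // => a a_rem.
case: eqP => [xi_a|]; last by rewrite mul0r.
by move: a_rem; rewrite -xi_a mem_rem_uniqF ?undup_uniq.
Qed.

Lemma emp_mean (S : {set 'I_n}) (h : X -> R) :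
  \sum_(a <- pts x) emp x S a * h a = #|S|%:R^-1 * \sum_(i in S) h (x i).
Proof.
under eq_bigr => a _ do rewrite /emp mulrAC.
rewrite -mulr_suml mulrC; congr (_ * _).
under [RHS]eq_bigr => i _ do rewrite -(sum_pts_indicator i h).
rewrite exchange_big /=; apply: eq_bigr => a _.
rewrite -mulr_suml; congr (_ * _).
rewrite -sum1_card natr_sum big_mkcond [RHS]big_mkcond /=.
by apply: eq_bigr => i _; rewrite inE; case: (i \in S); case: (x i == a).
Qed.

Lemma emp_mass1 (S : {set 'I_n}) :
  (0 < #|S|)%N -> \sum_(a <- pts x) emp (R:=R) x S a = 1.
Proof.
move=> S_gt0; have := emp_mean S (fun _ => 1).
under eq_bigr do rewrite mulr1.
by move=> ->; rewrite sumr_const mulVf // pnatr_eq0 -lt0n.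
Qed.

Lemma emp_coupling_exists (S T : {set 'I_n}) : (0 < #|S|)%N -> (0 < #|T|)%N ->
  exists g, is_coupling (pts x) (emp (R:=R) x S) (emp x T) g.
Proof.
move=> S_gt0 T_gt0; eexists; apply: product_coupling;
  by [exact: emp_ge0 | exact: emp_supp | exact: emp_mass1].
Qed.

End Empirical.

Section PanelCount.
Variables (n k : nat).

Definition panel_count (i : 'I_n) : nat :=
  (\sum_(S : {set 'I_n} | #|S| == k) (i \in S))%N.

Lemma panel_count_const (i j : 'I_n) : panel_count i = panel_count j.
Proof.
pose swap (S : {set 'I_n}) := [set tperm i j z | z in S].
have swapK : involutive swap.
  move=> S; rewrite /swap -imset_comp -[RHS]imset_id.
  by apply: eq_imset => z /=; rewrite tpermK.
rewrite /panel_count (reindex_inj (inv_inj swapK)) /=; apply: eq_big => S.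
  by rewrite card_imset //; exact: perm_inj.
by move=> _; rewrite -[X in X \in _](tpermR i j) mem_imset //; exact: perm_inj.
Qed.

Lemma sum_panel_count :
  (\sum_(i < n) panel_count i = k * #|[set S : {set 'I_n} | #|S| == k]|)%N.
Proof.
rewrite exchange_big /= (eq_bigr (fun _ => k)) => [|S /eqP <-]; last first.
  by rewrite -sum1_card [RHS]big_mkcond; apply: eq_bigr => i _; case: (i \in S).
by rewrite sum_nat_const mulnC; congr (_ * _)%N; apply: eq_card => S; rewrite inE.
Qed.

End PanelCount.

Section UniformPanel.
Variables (R : realType) (n k : nat).

Lemma EunifD (F G : {set 'I_n} -> R) :
  Eunif k (fun S => F S + G S) = Eunif k F + Eunif k G.
Proof. by rewrite /Eunif big_split mulrDr. Qed.

Lemma ler_Eunif (F G : {set 'I_n} -> R) :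
  (forall S : {set 'I_n}, #|S| = k -> F S <= G S) -> Eunif k F <= Eunif k G.
Proof.
move=> le_FG; rewrite /Eunif ler_wpM2l ?invr_ge0 //.
by apply: ler_sum => S /eqP; exact: le_FG.
Qed.

Lemma Eunif_panel_mean (F : 'I_n -> R) : (0 < k <= n)%N ->
  Eunif k (fun S => k%:R^-1 * \sum_(i in S) F i) = n%:R^-1 * \sum_(i < n) F i.
Proof.
case/andP=> k_gt0 k_le_n; have n_gt0 := leq_trans k_gt0 k_le_n.
set N := #|[set S : {set 'I_n} | #|S| == k]|.
set c := panel_count k (Ordinal n_gt0).
have N_gt0 : (0 < N)%N by rewrite /N card_draws card_ord bin_gt0.
have count_eq : (n * c = k * N)%N.
  rewrite -sum_panel_count (eq_bigr (fun _ => c)) ?sum_nat_const ?card_ord // => i _.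
  exact: panel_count_const.
have double_count :
    \sum_(S : {set 'I_n} | #|S| == k) \sum_(i in S) F i = c%:R * \sum_(i < n) F i.
  under eq_bigr => S _ do rewrite big_mkcond /=.
  rewrite exchange_big mulr_sumr; apply: eq_bigr => i _.
  rewrite /c -(panel_count_const k i) natr_sum mulr_suml; apply: eq_bigr => S _.
  by case: (i \in S); rewrite ?mul1r ?mul0r.
rewrite /Eunif -/N -mulr_sumr double_count.
have -> : c%:R = k%:R * N%:R / n%:R :> R.
  by rewrite -natrM -count_eq natrM mulrAC divff ?mul1r // pnatr_eq0 -lt0n.
field.
by rewrite !pnatr_eq0 -!lt0n k_gt0 n_gt0 N_gt0.
Qed.

End UniformPanel.

Section PanelBound.
Variables (R : realType) (X : eqType) (d : X -> X -> R).
Hypotheses (d_ge0 : forall a b, 0 <= d a b)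
           (d_triangle : forall a b c, d a c <= d a b + d b c).
Variables (n l : nat) (x : 'I_n -> X).

Lemma social_cost_le_panel_wass (y : 'I_l -> X) (S : {set 'I_n}) :
  (0 < #|S|)%N ->
  social_cost d x y
    <= panel_cost d #|S| x y S + wass d (pts x) (emp x [set: 'I_n]) (emp x S).
Proof.
move=> S_gt0.
have T_gt0 : (0 < #|[set: 'I_n]|)%N by rewrite cardsT (leq_trans S_gt0 (max_card _)).
have social_mean :
    social_cost d x y = \sum_(a <- pts x) emp x [set: 'I_n] a * cost d a y.
  rewrite (emp_mean _ _ (fun a => cost d a y)) cardsT card_ord.
  by congr (_ * _); apply: eq_bigl => i; rewrite inE.
rewrite social_mean /panel_cost -(emp_mean _ _ (fun a => cost d a y)).
apply: lipschitz_mean_le_wass; first exact: cost_lipschitz.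
exact: emp_coupling_exists.
Qed.

End PanelBound.

Theorem lemma4p13 (R : realType) (X : eqType) (d : X -> X -> R) (C : set X)
  (l n k : nat) (x : 'I_n -> X)
  (ybar : {set 'I_n} -> 'I_l -> X) (yopt : 'I_l -> X) :
  is_metric01 d ->
  (0 < l)%N ->
  (1 <= k <= n)%N ->
  (* yopt attains Social-Opt *)
  in_cands C yopt ->
  (forall y : 'I_l -> X, in_cands C y -> social_cost d x yopt <= social_cost d x y) ->
  (* ybar S is a minimizer of the panel cost over C^l *)
  (forall S : {set 'I_n}, #|S| = k ->
     in_cands C (ybar S) /\
     forall y : 'I_l -> X, in_cands C y -> panel_cost d k x (ybar S) S <= panel_cost d k x y S) ->
  Eunif k (fun S => social_cost d x (ybar S))
  <= social_cost d x yopt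
     + Eunif k (fun S => wass d (pts x) (emp x [set: 'I_n]) (emp x S)).
Proof.
move=> [d01 [_ [_ d_triangle]]] _ k_range yopt_C _ ybar_min.
have d_ge0 a b : 0 <= d a b by case/andP: (d01 a b).
have -> : social_cost d x yopt = Eunif k (panel_cost d k x yopt).
  exact: esym (Eunif_panel_mean _ k_range).
rewrite -EunifD; apply: ler_Eunif => S S_k.
have [_ ybar_S_min] := ybar_min S S_k.
have S_gt0 : (0 < #|S|)%N by rewrite S_k; case/andP: k_range.
apply: le_trans (social_cost_le_panel_wass d_ge0 d_triangle x (ybar S) S_gt0) _.
by rewrite S_k lerD2r; exact: ybar_S_min.
Qed.
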